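(* All the rules of each calculus of the family $\mathsf{CL}^*$ are height-preserving invertible: if the conclusion of a rule instance is derivable with height at most $n$, then each of its premisses is derivable with height at most $n$.
   Context: Height of a derivation = number of nodes on its longest branch minus one. Syntax: world labels $x,y,z,\dots$; neighbourhood labels $a,b,c,\dots$, including $\{x\}$ for each world label $x$. Relational atoms: $a\in N(x)$, $x\in a$, $a\subseteq b$. Labelled formulas: relational atoms, $x:A$, $a\Vdash^{\exists}A$, $a\Vdash^{\forall}A$, $x\Vdash_aA|B$ for formulas of $\mathcal{L}::=p\mid\bot\mid A\wedge B\mid A\lor B\mid A\to B\mid A>B$. Sequents $\Gamma\Rightarrow\Delta$: multisets, relational atoms only in $\Gamma$. Rules of $\mathsf{CL}$ (''(u!)'': $u$ not in conclusion; notation premisses / conclusion): initial sequents $x:p,\Gamma\Rightarrow\Delta,x:p$ ($p$ atomic), $x:\bot,\Gamma\Rightarrow\Delta$; G3 rules for $\wedge,\vee,\to$ on $x:A$; L$\forall$: $x:A,x\in a,a\Vdash^\forall A,\Gamma\Rightarrow\Delta$ / $x\in a,a\Vdash^\forall A,\Gamma\Rightarrow\Delta$; R$\forall$(x!): $x\in a,\Gamma\Rightarrow\Delta,x:A$ / $\Gamma\Rightarrow\Delta,a\Vdash^\forall A$; L$\exists$(x!): $x\in a,x:A,\Gamma\Rightarrow\Delta$ / $a\Vdash^\exists A,\Gamma\Rightarrow\Delta$; R$\exists$: $x\in a,\Gamma\Rightarrow\Delta,x:A,a\Vdash^\exists A$ / $x\in a,\Gamma\Rightarrow\Delta,a\Vdash^\exists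 A$; R$>$(a!): $a\in N(x),a\Vdash^\exists A,\Gamma\Rightarrow\Delta,x\Vdash_aA|B$ / $\Gamma\Rightarrow\Delta,x:A>B$; L$>$: $a\in N(x),x:A>B,\Gamma\Rightarrow\Delta,a\Vdash^\exists A$ and $x\Vdash_aA|B,a\in N(x),x:A>B,\Gamma\Rightarrow\Delta$ / $a\in N(x),x:A>B,\Gamma\Rightarrow\Delta$; R$|$: $c\in N(x),c\subseteq a,\Gamma\Rightarrow\Delta,x\Vdash_aA|B,c\Vdash^\exists A$ and $c\in N(x),c\subseteq a,\Gamma\Rightarrow\Delta,x\Vdash_aA|B,c\Vdash^\forall A\to B$ / $c\in N(x),c\subseteq a,\Gamma\Rightarrow\Delta,x\Vdash_aA|B$; L$|$(c!): $c\in N(x),c\subseteq a,c\Vdash^\exists A,c\Vdash^\forall A\to B,\Gamma\Rightarrow\Delta$ / $x\Vdash_aA|B,\Gamma\Rightarrow\Delta$; Ref: $a\subseteq a,\Gamma\Rightarrow\Delta$ / $\Gamma\Rightarrow\Delta$; Tr: $c\subseteq a,c\subseteq b,b\subseteq a,\Gamma\Rightarrow\Delta$ / $c\subseteq b,b\subseteq a,\Gamma\Rightarrow\Delta$; L$\subseteq$: $x\in a,a\subseteq b,x\in b,\Gamma\Rightarrow\Delta$ / $x\in a,a\subseteq b,\Gamma\Rightarrow\Delta$. Extension rules: N(a!): $a\in N(x),\Gamma\Rightarrow\Delta$ / $\Gamma\Rightarrow\Delta$; 0(y!): $y\in a,a\in N(x),\Gamma\Rightarrow\Delta$ / $a\in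 N(x),\Gamma\Rightarrow\Delta$; T(a!): $x\in a,a\in N(x),\Gamma\Rightarrow\Delta$ / $\Gamma\Rightarrow\Delta$; W: $x\in a,a\in N(x),\Gamma\Rightarrow\Delta$ / $a\in N(x),\Gamma\Rightarrow\Delta$; Single: $x\in\{x\},\{x\}\in N(x),\Gamma\Rightarrow\Delta$ / $\{x\}\in N(x),\Gamma\Rightarrow\Delta$; C: $\{x\}\in N(x),\{x\}\subseteq a,a\in N(x),\Gamma\Rightarrow\Delta$ / $a\in N(x),\Gamma\Rightarrow\Delta$; Repl$_1$: $y\in\{x\},At(x),At(y),\Gamma\Rightarrow\Delta$ / $y\in\{x\},At(x),\Gamma\Rightarrow\Delta$; Repl$_2$: same premiss / $y\in\{x\},At(y),\Gamma\Rightarrow\Delta$, with $At(x)$ among $x:P$ ($P$ atomic), $x\in a$, $a\in N(x)$, $x\in\{z\}$; U$_1$(c!): $z\in c,c\in N(x),a\in N(x),y\in a,b\in N(y),z\in b,\Gamma\Rightarrow\Delta$ / $a\in N(x),y\in a,b\in N(y),z\in b,\Gamma\Rightarrow\Delta$; U$_2$(c!): $z\in c,c\in N(y),a\in N(x),y\in a,b\in N(x),z\in b,\Gamma\Rightarrow\Delta$ / $a\in N(x),y\in a,b\in N(x),z\in b,\Gamma\Rightarrow\Delta$; A$_1$: $b\in N(y),a\in N(x),y\in a,b\in N(x),\Gamma\Rightarrow\Delta$ / $a\in N(x),y\in a,b\in N(x),\Gamma\Rightarrow\Delta$; A$_2$: $b\in N(x),a\in N(x),y\in a,b\in N(y),\Gamma\Rightarrow\Delta$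 / $a\in N(x),y\in a,b\in N(y),\Gamma\Rightarrow\Delta$; plus contracted instances of U$_1$,U$_2$,A$_1$. Family $\mathsf{CL}^*$: $\mathsf{CL}$; $\mathsf{CL}^N=\mathsf{CL}+$N,0; $\mathsf{CL}^T=\mathsf{CL}^N+$T; $\mathsf{CL}^W=\mathsf{CL}^T+$W; $\mathsf{CL}^C=\mathsf{CL}^W+$C,Single,Repl$_1$,Repl$_2$; $\mathsf{CL}^U=\mathsf{CL}+$U$_1$,U$_2$; $\mathsf{CL}^{NU},\dots,\mathsf{CL}^{CU}$ = $\mathsf{CL}^N,\dots,\mathsf{CL}^C$ + U$_1$,U$_2$; $\mathsf{CL}^A=\mathsf{CL}+$A$_1$,A$_2$; $\mathsf{CL}^{NA},\dots,\mathsf{CL}^{CA}$ = $\mathsf{CL}^N,\dots,\mathsf{CL}^C$ + A$_1$,A$_2$. *)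

From Stdlib Require Import List Permutation.
Import ListNotations.

Inductive form : Type :=
| Atom : nat -> form
| Bot  : form
| And  : form -> form -> form
| Or   : form -> form -> form
| Imp  : form -> form -> form
| Cond : form -> form -> form.

Definition wlab := nat.

(* neighbourhood labels: variables a,b,c,... and singletons {x} *)
Inductive nlab : Type :=
| NVar : nat -> nlab
| NSing : wlab -> nlab.

Inductive lform : Type :=
| LNb  : nlab -> wlab -> lform               (* a ∈ N(x) *)
| LIn  : wlab -> nlab -> lform               (* x ∈ a *)
| LSub : nlab -> nlab -> lform               (* a ⊆ b *)
| LW   : wlab -> form -> lform               (* x : A *)
| LEx  : nlab -> form -> lform               (* a ⊩∃ A *)
| LAll : nlab -> form -> lform               (* a ⊩∀ A *)
| LCmp : wlab -> nlab -> form -> form -> lform.  (* x ⊩_a A|B *)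

Definition relational (f : lform) : Prop :=
  match f with LNb _ _ | LIn _ _ | LSub _ _ => True | _ => False end.

(* sequents Γ ⇒ Δ; lists read as multisets (see seq_equiv) *)
Definition sequent := (list lform * list lform)%type.

Definition seq_equiv (S T : sequent) : Prop :=
  Permutation (fst S) (fst T) /\ Permutation (snd S) (snd T).

Definition wf_seq (S : sequent) : Prop :=
  forall f, In f (snd S) -> ~ relational f.

Definition w_in_nlab (x : wlab) (a : nlab) : Prop :=
  match a with NVar _ => False | NSing y => y = x end.

Definition w_occ (x : wlab) (f : lform) : Prop :=
  match f with
  | LNb a y => y = x \/ w_in_nlab x a
  | LIn y a => y = x \/ w_in_nlab x a
  | LSub a b => w_in_nlab x a \/ w_in_nlab x b
  | LW y _ => y = x
  | LEx a _ => w_in_nlab x a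
  | LAll a _ => w_in_nlab x a
  | LCmp y a _ _ => y = x \/ w_in_nlab x a
  end.

Definition n_occ (a : nlab) (f : lform) : Prop :=
  match f with
  | LNb b _ => b = a
  | LIn _ b => b = a
  | LSub b c => b = a \/ c = a
  | LW _ _ => False
  | LEx b _ => b = a
  | LAll b _ => b = a
  | LCmp _ b _ _ => b = a
  end.

Definition w_fresh (x : wlab) (S : sequent) : Prop :=
  forall f, In f (fst S ++ snd S) -> ~ w_occ x f.

Definition n_fresh (n : nat) (S : sequent) : Prop :=
  forall f, In f (fst S ++ snd S) -> ~ n_occ (NVar n) f.

(* L' is obtained from the multiset L by contracting duplicated items *)
Definition contraction (L' L : list lform) : Prop :=
  (forall f, In f L -> In f L') /\ exists R, Permutation L (L' ++ R).

(* atomic formulas At(x) allowed in the replacement rules, as schemata in x *)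
Inductive at_schema : Type :=
| AtW   : nat -> at_schema
| AtIn  : nlab -> at_schema
| AtNb  : nlab -> at_schema
| AtSg  : wlab -> at_schema.

Definition At (s : at_schema) (x : wlab) : lform :=
  match s with
  | AtW p => LW x (Atom p)
  | AtIn a => LIn x a
  | AtNb a => LNb a x
  | AtSg z => LIn x (NSing z)
  end.

Inductive rule : Type :=
| R_init | R_botL | R_andL | R_andR | R_orL | R_orR | R_impL | R_impR
| R_allL | R_allR | R_exL | R_exR | R_condR | R_condL | R_barR | R_barL
| R_Ref | R_Tr | R_subL
| R_N | R_0 | R_T | R_W | R_Single | R_C | R_Repl1 | R_Repl2
| R_U1 | R_U2 | R_A1 | R_A2.

Inductive inst : rule -> list sequent -> sequent -> Prop :=
| i_init : forall x p G D,
    inst R_init [] (LW x (Atom p) :: G, LW x (Atom p) :: D)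
| i_botL : forall x G D,
    inst R_botL [] (LW x Bot :: G, D)
| i_andL : forall x A B G D,
    inst R_andL [(LW x A :: LW x B :: G, D)] (LW x (And A B) :: G, D)
| i_andR : forall x A B G D,
    inst R_andR [(G, LW x A :: D); (G, LW x B :: D)] (G, LW x (And A B) :: D)
| i_orL : forall x A B G D,
    inst R_orL [(LW x A :: G, D); (LW x B :: G, D)] (LW x (Or A B) :: G, D)
| i_orR : forall x A B G D,
    inst R_orR [(G, LW x A :: LW x B :: D)] (G, LW x (Or A B) :: D)
| i_impL : forall x A B G D,
    inst R_impL [(G, LW x A :: D); (LW x B :: G, D)] (LW x (Imp A B) :: G, D)
| i_impR : forall x A B G D,
    inst R_impR [(LW x A :: G, LW x B :: D)] (G, LW x (Imp A B) :: D)
| i_allL : forall x a A G D,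
    inst R_allL [(LW x A :: LIn x a :: LAll a A :: G, D)]
                (LIn x a :: LAll a A :: G, D)
| i_allR : forall x a A G D,
    w_fresh x (G, LAll a A :: D) ->
    inst R_allR [(LIn x a :: G, LW x A :: D)] (G, LAll a A :: D)
| i_exL : forall x a A G D,
    w_fresh x (LEx a A :: G, D) ->
    inst R_exL [(LIn x a :: LW x A :: G, D)] (LEx a A :: G, D)
| i_exR : forall x a A G D,
    inst R_exR [(LIn x a :: G, LW x A :: LEx a A :: D)]
               (LIn x a :: G, LEx a A :: D)
| i_condR : forall x n A B G D,
    n_fresh n (G, LW x (Cond A B) :: D) ->
    inst R_condR [(LNb (NVar n) x :: LEx (NVar n) A :: G,
                   LCmp x (NVar n) A B :: D)]
                 (G, LW x (Cond A B) :: D)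
| i_condL : forall x a A B G D,
    inst R_condL [(LNb a x :: LW x (Cond A B) :: G, LEx a A :: D);
                  (LCmp x a A B :: LNb a x :: LW x (Cond A B) :: G, D)]
                 (LNb a x :: LW x (Cond A B) :: G, D)
| i_barR : forall x a c A B G D,
    inst R_barR [(LNb c x :: LSub c a :: G, LCmp x a A B :: LEx c A :: D);
                 (LNb c x :: LSub c a :: G, LCmp x a A B :: LAll c (Imp A B) :: D)]
                (LNb c x :: LSub c a :: G, LCmp x a A B :: D)
| i_barL : forall x a n A B G D,
    n_fresh n (LCmp x a A B :: G, D) ->
    inst R_barL [(LNb (NVar n) x :: LSub (NVar n) a :: LEx (NVar n) A
                  :: LAll (NVar n) (Imp A B) :: G, D)]
                (LCmp x a A B :: G, D)
| i_Ref : forall a G D,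
    inst R_Ref [(LSub a a :: G, D)] (G, D)
| i_Tr : forall a b c G D,
    inst R_Tr [(LSub c a :: LSub c b :: LSub b a :: G, D)]
              (LSub c b :: LSub b a :: G, D)
| i_subL : forall x a b G D,
    inst R_subL [(LIn x a :: LSub a b :: LIn x b :: G, D)]
                (LIn x a :: LSub a b :: G, D)
| i_N : forall x n G D,
    n_fresh n (G, D) ->
    inst R_N [(LNb (NVar n) x :: G, D)] (G, D)
| i_0 : forall x y a G D,
    w_fresh y (LNb a x :: G, D) ->
    inst R_0 [(LIn y a :: LNb a x :: G, D)] (LNb a x :: G, D)
| i_T : forall x n G D,
    n_fresh n (G, D) ->
    inst R_T [(LIn x (NVar n) :: LNb (NVar n) x :: G, D)] (G, D)
| i_W : forall x a G D,
    inst R_W [(LIn x a :: LNb a x :: G, D)] (LNb a x :: G, D)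
| i_Single : forall x G D,
    inst R_Single [(LIn x (NSing x) :: LNb (NSing x) x :: G, D)]
                  (LNb (NSing x) x :: G, D)
| i_C : forall x a G D,
    inst R_C [(LNb (NSing x) x :: LSub (NSing x) a :: LNb a x :: G, D)]
             (LNb a x :: G, D)
| i_Repl1 : forall x y s G D,
    inst R_Repl1 [(LIn y (NSing x) :: At s x :: At s y :: G, D)]
                 (LIn y (NSing x) :: At s x :: G, D)
| i_Repl2 : forall x y s G D,
    inst R_Repl2 [(LIn y (NSing x) :: At s x :: At s y :: G, D)]
                 (LIn y (NSing x) :: At s y :: G, D)
(* U1, U2, A1 also in their contracted instances (L' a contraction of the
   principal multiset; L' = the principal multiset gives the plain rule) *)
| i_U1 : forall x y z a b n L' G D,
    contraction L' [LNb a x; LIn y a; LNb b y; LIn z b] ->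
    n_fresh n (L' ++ G, D) ->
    inst R_U1 [(LIn z (NVar n) :: LNb (NVar n) x :: L' ++ G, D)] (L' ++ G, D)
| i_U2 : forall x y z a b n L' G D,
    contraction L' [LNb a x; LIn y a; LNb b x; LIn z b] ->
    n_fresh n (L' ++ G, D) ->
    inst R_U2 [(LIn z (NVar n) :: LNb (NVar n) y :: L' ++ G, D)] (L' ++ G, D)
| i_A1 : forall x y a b L' G D,
    contraction L' [LNb a x; LIn y a; LNb b x] ->
    inst R_A1 [(LNb b y :: L' ++ G, D)] (L' ++ G, D)
| i_A2 : forall x y a b G D,
    inst R_A2 [(LNb b x :: LNb a x :: LIn y a :: LNb b y :: G, D)]
              (LNb a x :: LIn y a :: LNb b y :: G, D).

Inductive level : Type := Lbase | LvN | LvT | LvW | LvC.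
Inductive ext : Type := Enone | EU | EA.

Definition calculus := (level * ext)%type.

Definition level_rank (l : level) : nat :=
  match l with Lbase => 0 | LvN => 1 | LvT => 2 | LvW => 3 | LvC => 4 end.

Definition in_calc (K : calculus) (r : rule) : Prop :=
  let (l, e) := K in
  match r with
  | R_N | R_0 => 1 <= level_rank l
  | R_T => 2 <= level_rank l
  | R_W => 3 <= level_rank l
  | R_C | R_Single | R_Repl1 | R_Repl2 => 4 <= level_rank l
  | R_U1 | R_U2 => e = EU
  | R_A1 | R_A2 => e = EA
  | _ => True
  end.

(* derivable K n S : S has a derivation in K of height <= n (height = number
   of nodes of the longest branch minus one); sequents are taken up to
   multiset equality and must be well formed. *)
Inductive derivable (K : calculus) : nat -> sequent -> Prop :=
| d_leaf : forall n r c S,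
    in_calc K r -> inst r [] c -> seq_equiv c S -> wf_seq S ->
    derivable K n S
| d_node : forall n r ps c S,
    in_calc K r -> inst r ps c -> seq_equiv c S -> wf_seq S ->
    (forall P, In P ps -> derivable K n P) ->
    derivable K (Datatypes.S n) S.

(* Every rule of CL* is of one of two kinds. Either each premiss is the conclusion plus some
   side formulas (all rules except the G3 rules, R∀, L∃, R> and L|), and the premisses follow
   from the conclusion by height-preserving weakening; or the rule has a single principal
   formula, principal in no other rule, which its premisses replace. In the second case one
   inverts by induction on the height: if the formula is principal in the last rule, the
   wanted sequent is a premiss of that rule, up to renaming its eigenlabel; otherwise the
   formula lies in the context, and one inverts the premisses of the last rule and applies
   the rule again. Both inductions rest on the invariance of height-bounded derivability
   under injective renamings of labels, used to keep eigenlabels away from the formulas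
   being added. *)

From Stdlib Require Import List Permutation Arith Lia.
Import ListNotations.

(** * Sequents up to multiset equality *)

Definition seq_app (S T : sequent) : sequent := (fst S ++ fst T, snd S ++ snd T).
Infix "⊕" := seq_app (at level 60, right associativity).

Lemma seq_equiv_refl S : seq_equiv S S.
Proof. split; reflexivity. Qed.

Lemma seq_equiv_sym S T : seq_equiv S T -> seq_equiv T S.
Proof. intros [H1 H2]; split; symmetry; assumption. Qed.

Lemma seq_equiv_trans S T U : seq_equiv S T -> seq_equiv T U -> seq_equiv S U.
Proof. intros [H1 H2] [H3 H4]; split; eapply Permutation_trans; eassumption. Qed.

Lemma seq_app_equiv S S' T T' :
  seq_equiv S S' -> seq_equiv T T' -> seq_equiv (S ⊕ T) (S' ⊕ T').
Proof. intros [H1 H2] [H3 H4]; split; apply Permutation_app; assumption. Qed.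

Lemma seq_app_assoc S T U : (S ⊕ T) ⊕ U = S ⊕ (T ⊕ U).
Proof. unfold seq_app; simpl; rewrite !app_assoc; reflexivity. Qed.

Lemma seq_app_swap S T U : seq_equiv (S ⊕ T ⊕ U) (T ⊕ S ⊕ U).
Proof. split; apply Permutation_app_swap_app. Qed.

Lemma wf_seq_app S T : wf_seq (S ⊕ T) <-> wf_seq S /\ wf_seq T.
Proof.
  unfold wf_seq; simpl; split.
  - intros H; split; intros f Hf; apply H, in_or_app; auto.
  - intros [H1 H2] f Hf; apply in_app_or in Hf as [Hf | Hf]; auto.
Qed.

Lemma wf_seq_equiv S T : seq_equiv S T -> wf_seq S -> wf_seq T.
Proof.
  intros [_ H] HS f Hf; apply HS; eapply Permutation_in; [symmetry |]; eassumption.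
Qed.

Inductive side := Antecedent | Succedent.

Definition single (s : side) (phi : lform) : sequent :=
  match s with Antecedent => ([phi], []) | Succedent => ([], [phi]) end.

Definition part (s : side) (S : sequent) : list lform :=
  match s with Antecedent => fst S | Succedent => snd S end.

Lemma Permutation_app_cons_split {A} (x : A) l1 l2 l :
  Permutation (l1 ++ l2) (x :: l) ->
  In x l1 \/ exists l2', Permutation l2 (x :: l2') /\ Permutation l (l1 ++ l2').
Proof.
  intros H.
  assert (Hx : In x (l1 ++ l2))
    by (apply Permutation_in with (x :: l); [symmetry; exact H | now left]).
  apply in_app_or in Hx as [Hx | Hx]; [now left | right].
  apply in_split in Hx as (la & lb & ->).
  exists (la ++ lb); split; [symmetry; apply Permutation_middle |].
  apply Permutation_cons_inv with x; symmetry.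
  rewrite <- H, !app_assoc; apply Permutation_middle.
Qed.

Lemma seq_equiv_single_split s phi P C0 C :
  seq_equiv (P ⊕ C0) (single s phi ⊕ C) ->
  In phi (part s P) \/
  exists C1, seq_equiv C0 (single s phi ⊕ C1) /\ seq_equiv C (P ⊕ C1).
Proof.
  destruct P as [Pl Pr], C0 as [G0 D0], C as [G D]; intros [H1 H2]; destruct s; simpl in *.
  - destruct (Permutation_app_cons_split _ _ _ _ H1) as [? | (G1 & HG0 & HG)]; [now left | right].
    exists (G1, D0); repeat split; simpl; auto; symmetry; auto.
  - destruct (Permutation_app_cons_split _ _ _ _ H2) as [? | (D1 & HD0 & HD)]; [now left | right].
    exists (G0, D1); repeat split; simpl; auto; symmetry; auto.
Qed.

Lemma seq_equiv_single_cancel s phi C C' :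
  seq_equiv (single s phi ⊕ C) (single s phi ⊕ C') -> seq_equiv C C'.
Proof.
  intros [H1 H2]; destruct s; split; simpl in *; eauto using Permutation_cons_inv.
Qed.

(** * Labels and renamings *)

Inductive kind := World | Nbhd.

Definition label := (kind * nat)%type.

Definition nlabels (a : nlab) : list label :=
  match a with NVar n => [(Nbhd, n)] | NSing x => [(World, x)] end.

Definition flabels (f : lform) : list label :=
  match f with
  | LNb a x | LIn x a | LCmp x a _ _ => (World, x) :: nlabels a
  | LSub a b => nlabels a ++ nlabels b
  | LW x _ => [(World, x)]
  | LEx a _ | LAll a _ => nlabels a
  end.

Definition labels (S : sequent) : list label := flat_map flabels (fst S ++ snd S).

Lemma in_labels_app l S T : In l (labels (S ⊕ T)) <-> In l (labels S) \/ In l (labels T).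
Proof.
  unfold labels; simpl; rewrite !flat_map_app, !in_app_iff; tauto.
Qed.

Lemma in_labels_equiv l S T : seq_equiv S T -> In l (labels S) -> In l (labels T).
Proof.
  intros [H1 H2]; unfold labels; rewrite !in_flat_map; intros (f & Hf & Hl).
  exists f; split; auto; eapply Permutation_in; [apply Permutation_app |]; eauto.
Qed.

Lemma w_occ_flabels x f : w_occ x f <-> In (World, x) (flabels f).
Proof.
  destruct f; repeat match goal with a : nlab |- _ => destruct a end; simpl;
    rewrite ?in_app_iff; simpl; intuition congruence.
Qed.

Lemma n_occ_flabels n f : n_occ (NVar n) f <-> In (Nbhd, n) (flabels f).
Proof.
  destruct f; repeat match goal with a : nlab |- _ => destruct a end; simpl;
    rewrite ?in_app_iff; simpl; intuition congruence.
Qed.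

Lemma w_fresh_labels x S : w_fresh x S <-> ~ In (World, x) (labels S).
Proof.
  unfold w_fresh, labels; rewrite in_flat_map; setoid_rewrite w_occ_flabels; firstorder.
Qed.

Lemma n_fresh_labels n S : n_fresh n S <-> ~ In (Nbhd, n) (labels S).
Proof.
  unfold n_fresh, labels; rewrite in_flat_map; setoid_rewrite n_occ_flabels; firstorder.
Qed.

Lemma exists_fresh_label k (L : list label) : exists x, ~ In (k, x) L.
Proof.
  exists (S (list_max (map snd L))); intros H.
  assert (Hle : list_max (map snd L) <= list_max (map snd L)) by reflexivity.
  apply list_max_le in Hle; rewrite Forall_forall in Hle.
  specialize (Hle _ (in_map snd _ _ H)); simpl in Hle; lia.
Qed.

Definition renaming := kind -> nat -> nat.

Definition ren_label (rho : renaming) '((k, x) : label) : label := (k, rho k x).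

Definition ren_nlab (rho : renaming) (a : nlab) : nlab :=
  match a with NVar n => NVar (rho Nbhd n) | NSing x => NSing (rho World x) end.

Definition ren_lform (rho : renaming) (f : lform) : lform :=
  match f with
  | LNb a x => LNb (ren_nlab rho a) (rho World x)
  | LIn x a => LIn (rho World x) (ren_nlab rho a)
  | LSub a b => LSub (ren_nlab rho a) (ren_nlab rho b)
  | LW x A => LW (rho World x) A
  | LEx a A => LEx (ren_nlab rho a) A
  | LAll a A => LAll (ren_nlab rho a) A
  | LCmp x a A B => LCmp (rho World x) (ren_nlab rho a) A B
  end.

Definition ren_seq (rho : renaming) (S : sequent) : sequent :=
  (map (ren_lform rho) (fst S), map (ren_lform rho) (snd S)).

Definition ren_at (rho : renaming) (t : at_schema) : at_schema :=
  match t with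
  | AtW p => AtW p
  | AtIn a => AtIn (ren_nlab rho a)
  | AtNb a => AtNb (ren_nlab rho a)
  | AtSg z => AtSg (rho World z)
  end.

Lemma ren_At rho t x : ren_lform rho (At t x) = At (ren_at rho t) (rho World x).
Proof. destruct t; reflexivity. Qed.

Lemma ren_seq_app rho S T : ren_seq rho (S ⊕ T) = ren_seq rho S ⊕ ren_seq rho T.
Proof. unfold ren_seq, seq_app; simpl; rewrite !map_app; reflexivity. Qed.

Lemma seq_equiv_ren rho S T : seq_equiv S T -> seq_equiv (ren_seq rho S) (ren_seq rho T).
Proof. intros [H1 H2]; split; apply Permutation_map; assumption. Qed.

Lemma wf_seq_ren rho S : wf_seq S -> wf_seq (ren_seq rho S).
Proof.
  intros H f Hf; apply in_map_iff in Hf as (g & <- & Hg).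
  specialize (H g Hg); destruct g; simpl in *; tauto.
Qed.

Lemma flabels_ren rho f : flabels (ren_lform rho f) = map (ren_label rho) (flabels f).
Proof.
  destruct f; repeat match goal with a : nlab |- _ => destruct a end; reflexivity.
Qed.

Lemma labels_ren rho S : labels (ren_seq rho S) = map (ren_label rho) (labels S).
Proof.
  unfold labels, ren_seq; simpl; rewrite <- map_app.
  induction (fst S ++ snd S) as [| f L IH]; simpl; auto.
  rewrite map_app, IH, flabels_ren; reflexivity.
Qed.

Lemma ren_seq_id_on rho S :
  (forall k x, In (k, x) (labels S) -> rho k x = x) -> ren_seq rho S = S.
Proof.
  assert (Hf : forall f, (forall k x, In (k, x) (flabels f) -> rho k x = x) ->
                         ren_lform rho f = f).
  { intros f H; destruct f; repeat match goal with a : nlab |- _ => destruct a end;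
      simpl in *; f_equal; try f_equal; apply H; rewrite ?in_app_iff; simpl; tauto. }
  intros H; destruct S as [G D]; unfold ren_seq; simpl; f_equal;
    rewrite <- map_id; apply map_ext_in; intros f Hf'; apply Hf; intros k x Hx; apply H;
    unfold labels; apply in_flat_map; exists f; rewrite in_app_iff; auto.
Qed.

Definition injective_ren (rho : renaming) : Prop := forall k x y, rho k x = rho k y -> x = y.

Lemma fresh_ren rho l S :
  injective_ren rho -> ~ In l (labels S) -> ~ In (ren_label rho l) (labels (ren_seq rho S)).
Proof.
  intros Hinj Hl; rewrite labels_ren; intros H; apply in_map_iff in H as ([k x] & Heq & Hx).
  destruct l as [k' x']; simpl in Heq; injection Heq as -> Heq.
  apply Hinj in Heq; subst; contradiction.
Qed.

Definition transpose (x y z : nat) : nat :=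
  if z =? x then y else if z =? y then x else z.

Ltac nat_eqb_cases :=
  repeat match goal with
         | |- context [?a =? ?b] => is_var a; is_var b; destruct (Nat.eqb_spec a b)
         end.

Lemma transpose_involutive x y z : transpose x y (transpose x y z) = z.
Proof.
  unfold transpose; nat_eqb_cases; congruence.
Qed.

Lemma transpose_left x y : transpose x y x = y.
Proof. unfold transpose; rewrite Nat.eqb_refl; reflexivity. Qed.

Definition swap_ren (k : kind) (x y : nat) : renaming :=
  fun k' => match k, k' with
            | World, World | Nbhd, Nbhd => transpose x y
            | _, _ => fun z => z
            end.

Lemma swap_ren_injective k x y : injective_ren (swap_ren k x y).
Proof.
  intros k' z z' H; destruct k, k'; simpl in H; auto;
    rewrite <- (transpose_involutive x y z), H; apply transpose_involutive.
Qed.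

Lemma swap_ren_fresh k x y S :
  ~ In (k, x) (labels S) -> ~ In (k, y) (labels S) -> ren_seq (swap_ren k x y) S = S.
Proof.
  intros Hx Hy; apply ren_seq_id_on; intros k' z Hz.
  destruct k, k'; simpl; auto; unfold transpose; nat_eqb_cases; subst; tauto.
Qed.

(** * Rule schemata *)

Definition eigen_fresh (e : option label) (L : list label) : Prop :=
  forall l, e = Some l -> ~ In l L.

(* [schema r P acts e]: the instances of [r] are the [P ⊕ C] with premisses [a ⊕ C] for
   [a] in [acts], whenever the eigenlabel [e] is fresh for [P ⊕ C]. *)
Inductive schema : rule -> sequent -> list sequent -> option label -> Prop :=
| s_init x p : schema R_init ([LW x (Atom p)], [LW x (Atom p)]) [] None
| s_botL x : schema R_botL ([LW x Bot], []) [] None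
| s_andL x A B : schema R_andL ([LW x (And A B)], []) [([LW x A; LW x B], [])] None
| s_andR x A B :
    schema R_andR ([], [LW x (And A B)]) [([], [LW x A]); ([], [LW x B])] None
| s_orL x A B : schema R_orL ([LW x (Or A B)], []) [([LW x A], []); ([LW x B], [])] None
| s_orR x A B : schema R_orR ([], [LW x (Or A B)]) [([], [LW x A; LW x B])] None
| s_impL x A B :
    schema R_impL ([LW x (Imp A B)], []) [([], [LW x A]); ([LW x B], [])] None
| s_impR x A B : schema R_impR ([], [LW x (Imp A B)]) [([LW x A], [LW x B])] None
| s_allL x a A :
    schema R_allL ([LIn x a; LAll a A], []) [([LW x A; LIn x a; LAll a A], [])] None
| s_allR x a A : schema R_allR ([], [LAll a A]) [([LIn x a], [LW x A])] (Some (World, x))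
| s_exL x a A : schema R_exL ([LEx a A], []) [([LIn x a; LW x A], [])] (Some (World, x))
| s_exR x a A :
    schema R_exR ([LIn x a], [LEx a A]) [([LIn x a], [LW x A; LEx a A])] None
| s_condR x n A B :
    schema R_condR ([], [LW x (Cond A B)])
      [([LNb (NVar n) x; LEx (NVar n) A], [LCmp x (NVar n) A B])] (Some (Nbhd, n))
| s_condL x a A B :
    schema R_condL ([LNb a x; LW x (Cond A B)], [])
      [([LNb a x; LW x (Cond A B)], [LEx a A]);
       ([LCmp x a A B; LNb a x; LW x (Cond A B)], [])] None
| s_barR x a c A B :
    schema R_barR ([LNb c x; LSub c a], [LCmp x a A B])
      [([LNb c x; LSub c a], [LCmp x a A B; LEx c A]);
       ([LNb c x; LSub c a], [LCmp x a A B; LAll c (Imp A B)])] None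
| s_barL x a n A B :
    schema R_barL ([LCmp x a A B], [])
      [([LNb (NVar n) x; LSub (NVar n) a; LEx (NVar n) A; LAll (NVar n) (Imp A B)], [])]
      (Some (Nbhd, n))
| s_Ref a : schema R_Ref ([], []) [([LSub a a], [])] None
| s_Tr a b c :
    schema R_Tr ([LSub c b; LSub b a], []) [([LSub c a; LSub c b; LSub b a], [])] None
| s_subL x a b :
    schema R_subL ([LIn x a; LSub a b], []) [([LIn x a; LSub a b; LIn x b], [])] None
| s_N x n : schema R_N ([], []) [([LNb (NVar n) x], [])] (Some (Nbhd, n))
| s_0 x y a : schema R_0 ([LNb a x], []) [([LIn y a; LNb a x], [])] (Some (World, y))
| s_T x n :
    schema R_T ([], []) [([LIn x (NVar n); LNb (NVar n) x], [])] (Some (Nbhd, n))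
| s_W x a : schema R_W ([LNb a x], []) [([LIn x a; LNb a x], [])] None
| s_Single x :
    schema R_Single ([LNb (NSing x) x], []) [([LIn x (NSing x); LNb (NSing x) x], [])] None
| s_C x a :
    schema R_C ([LNb a x], []) [([LNb (NSing x) x; LSub (NSing x) a; LNb a x], [])] None
| s_Repl1 x y t :
    schema R_Repl1 ([LIn y (NSing x); At t x], [])
      [([LIn y (NSing x); At t x; At t y], [])] None
| s_Repl2 x y t :
    schema R_Repl2 ([LIn y (NSing x); At t y], [])
      [([LIn y (NSing x); At t x; At t y], [])] None
| s_U1 x y z a b n L :
    contraction L [LNb a x; LIn y a; LNb b y; LIn z b] ->
    schema R_U1 (L, []) [(LIn z (NVar n) :: LNb (NVar n) x :: L, [])] (Some (Nbhd, n))
| s_U2 x y z a b n L :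
    contraction L [LNb a x; LIn y a; LNb b x; LIn z b] ->
    schema R_U2 (L, []) [(LIn z (NVar n) :: LNb (NVar n) y :: L, [])] (Some (Nbhd, n))
| s_A1 x y a b L :
    contraction L [LNb a x; LIn y a; LNb b x] ->
    schema R_A1 (L, []) [(LNb b y :: L, [])] None
| s_A2 x y a b :
    schema R_A2 ([LNb a x; LIn y a; LNb b y], [])
      [([LNb b x; LNb a x; LIn y a; LNb b y], [])] None.

Lemma inst_schema {r ps c} :
  inst r ps c ->
  exists P acts e C, schema r P acts e /\ c = P ⊕ C /\
    ps = map (fun a => a ⊕ C) acts /\ eigen_fresh e (labels c).
Proof.
  intros Hi; destruct Hi; eexists _, _, _, (G, D);
    (split; [econstructor; eauto | split; [reflexivity | split; [reflexivity |]]]);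
    intros l Hl; inversion Hl; subst;
    first [apply w_fresh_labels | apply n_fresh_labels]; assumption.
Qed.

Lemma schema_inst r P acts e C :
  schema r P acts e -> eigen_fresh e (labels (P ⊕ C)) ->
  inst r (map (fun a => a ⊕ C) acts) (P ⊕ C).
Proof.
  destruct C as [G D]; intros Hs He; destruct Hs; simpl; econstructor; eauto;
    first [apply w_fresh_labels | apply n_fresh_labels]; apply He; reflexivity.
Qed.

Lemma contraction_incl L' L f : contraction L' L -> In f L' -> In f L.
Proof.
  intros [_ [R HR]] Hf.
  apply Permutation_in with (L' ++ R); [symmetry |]; auto using in_or_app.
Qed.

Lemma contraction_map (h : lform -> lform) L' L :
  contraction L' L -> contraction (map h L') (map h L).
Proof.
  intros [H1 [R H2]]; split.
  - intros f Hf; apply in_map_iff in Hf as (g & <- & Hg); apply in_map; auto.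
  - exists (map h R); rewrite <- map_app; apply Permutation_map; auto.
Qed.

Lemma schema_ren rho r P acts e :
  schema r P acts e ->
  schema r (ren_seq rho P) (map (ren_seq rho) acts) (option_map (ren_label rho) e).
Proof.
  destruct 1; unfold ren_seq; simpl; rewrite ?ren_At; econstructor;
    try match goal with H : contraction _ _ |- _ =>
          apply (contraction_map (ren_lform rho)) in H; simpl in H; exact H end.
Qed.

Lemma eigen_fresh_ren rho e S :
  injective_ren rho -> eigen_fresh e (labels S) ->
  eigen_fresh (option_map (ren_label rho) e) (labels (ren_seq rho S)).
Proof.
  intros Hrho He l Hl; destruct e as [l0 |]; [| discriminate].
  injection Hl as <-; apply fresh_ren; auto.
Qed.

Lemma inst_ren rho r ps c :
  injective_ren rho -> inst r ps c -> inst r (map (ren_seq rho) ps) (ren_seq rho c).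
Proof.
  intros Hrho Hi; destruct (inst_schema Hi) as (P & acts & e & C & Hs & -> & -> & He).
  rewrite ren_seq_app, map_map.
  replace (map _ acts) with (map (fun a => a ⊕ ren_seq rho C) (map (ren_seq rho) acts))
    by (rewrite map_map; apply map_ext; intros; symmetry; apply ren_seq_app).
  apply schema_inst with (option_map (ren_label rho) e); [now apply schema_ren |].
  rewrite <- ren_seq_app; now apply eigen_fresh_ren.
Qed.

(** * Height-bounded derivations *)

Lemma derivable_wf {K n S} : derivable K n S -> wf_seq S.
Proof. destruct 1; assumption. Qed.

Lemma derivable_mono {K n S} m : n <= m -> derivable K n S -> derivable K m S.
Proof.
  intros Hnm H; revert m Hnm; induction H as [| n r ps c S Hr Hi Hc HS Hps IH]; intros m Hm.
  - eapply d_leaf; eauto.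
  - destruct m as [| m]; [lia |].
    eapply d_node; eauto; intros P HP; apply IH; auto; lia.
Qed.

Lemma derivable_perm {K n} S {T} : seq_equiv S T -> derivable K n S -> derivable K n T.
Proof.
  intros HST H; destruct H; [eapply d_leaf | eapply d_node];
    eauto using seq_equiv_trans, wf_seq_equiv.
Qed.

Lemma derivable_ren {K n S} rho :
  injective_ren rho -> derivable K n S -> derivable K n (ren_seq rho S).
Proof.
  intros Hrho H; induction H as [n r c S Hr Hi Hc HS | n r ps c S Hr Hi Hc HS Hps IH].
  - apply (inst_ren rho) in Hi; auto.
    eapply d_leaf; eauto using seq_equiv_ren, wf_seq_ren.
  - apply (inst_ren rho) in Hi; auto.
    eapply d_node; eauto using seq_equiv_ren, wf_seq_ren.
    intros P HP; apply in_map_iff in HP as (Q & <- & HQ); auto.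
Qed.

Definition premisses_below (K : calculus) (n : nat) (ps : list sequent) : Prop :=
  match n with
  | 0 => ps = []
  | S m => forall P, In P ps -> derivable K m P
  end.

Lemma premisses_below_map {K n} {A} {f : A -> sequent} {l} (g : A -> sequent) :
  premisses_below K n (map f l) ->
  (forall m a, m < n -> In a l -> derivable K m (f a) -> derivable K m (g a)) ->
  premisses_below K n (map g l).
Proof.
  destruct n as [| n]; simpl.
  - intros H _; apply map_eq_nil in H; subst; reflexivity.
  - intros H Hfg P HP; apply in_map_iff in HP as (a & <- & Ha).
    apply Hfg; auto using in_map.
Qed.

Lemma premisses_below_in {K n ps P} : premisses_below K n ps -> In P ps -> derivable K n P.
Proof.
  destruct n as [| n]; simpl; [intros -> [] |].
  intros H HP; apply (derivable_mono (n := n)); auto.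
Qed.

Lemma derivable_last_rule {K n S} :
  derivable K n S ->
  exists r P acts e C, in_calc K r /\ schema r P acts e /\
    eigen_fresh e (labels (P ⊕ C)) /\ seq_equiv (P ⊕ C) S /\
    premisses_below K n (map (fun a => a ⊕ C) acts).
Proof.
  destruct 1 as [n r c S Hr Hi Hc HS | n r ps c S Hr Hi Hc HS Hps];
    destruct (inst_schema Hi) as (P & acts & e & C & Hs & -> & Hacts & He);
    exists r, P, acts, e, C; refine (conj Hr (conj Hs (conj He (conj Hc _)))).
  - destruct n; [exact (eq_sym Hacts) | intros P' HP'; rewrite <- Hacts in HP'; destruct HP'].
  - rewrite <- Hacts; exact Hps.
Qed.

Lemma derivable_schema {K n r P acts e} C {S} :
  in_calc K r -> schema r P acts e -> eigen_fresh e (labels (P ⊕ C)) ->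
  seq_equiv (P ⊕ C) S -> wf_seq S -> premisses_below K n (map (fun a => a ⊕ C) acts) ->
  derivable K n S.
Proof.
  intros Hr Hs He HPC HS Hps; pose proof (schema_inst _ _ _ _ C Hs He) as Hi.
  destruct n; simpl in Hps.
  - rewrite Hps in Hi; eapply d_leaf; eauto.
  - eapply d_node; eauto.
Qed.

Lemma derivable_last_rule_avoiding {K n S} (L : list label) :
  derivable K n S ->
  exists r P acts e C, in_calc K r /\ schema r P acts e /\
    eigen_fresh e (labels (P ⊕ C) ++ L) /\ seq_equiv (P ⊕ C) S /\
    premisses_below K n (map (fun a => a ⊕ C) acts).
Proof.
  intros HS.
  destruct (derivable_last_rule HS) as (r & P & acts & e & C & Hr & Hs & He & HPC & Hps).
  destruct e as [[k x] |].
  2: { exists r, P, acts, None, C; refine (conj Hr (conj Hs (conj _ (conj HPC Hps)))).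
       discriminate. }
  destruct (exists_fresh_label k (labels (P ⊕ C) ++ L)) as (x' & Hx').
  assert (Hx : ~ In (k, x) (labels (P ⊕ C))) by (apply He; reflexivity).
  rewrite in_app_iff, in_labels_app in Hx'; rewrite in_labels_app in Hx.
  set (rho := swap_ren k x x').
  assert (HP : ren_seq rho P = P) by (apply swap_ren_fresh; tauto).
  assert (HC : ren_seq rho C = C) by (apply swap_ren_fresh; tauto).
  exists r, P, (map (ren_seq rho) acts), (Some (k, x')), C.
  refine (conj Hr (conj _ (conj _ (conj HPC _)))).
  - replace (Some (k, x')) with (option_map (ren_label rho) (Some (k, x)))
      by (unfold rho; destruct k; simpl; rewrite transpose_left; reflexivity).
    rewrite <- HP at 1; apply schema_ren; exact Hs.
  - intros l [= <-]; rewrite in_app_iff, in_labels_app; tauto.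
  - rewrite map_map; apply (premisses_below_map _ Hps); intros m a _ _ Ha.
    cbv beta in *; rewrite <- HC, <- ren_seq_app; apply derivable_ren; auto.
    apply swap_ren_injective.
Qed.

(** * Height-preserving weakening and inversion *)

Lemma derivable_weaken {K n S} T : wf_seq T -> derivable K n S -> derivable K n (T ⊕ S).
Proof.
  revert S T; induction n as [n IH] using lt_wf_ind; intros S T HT HS.
  destruct (derivable_last_rule_avoiding (labels T) HS)
    as (r & P & acts & e & C & Hr & Hs & He & HPC & Hps).
  apply (derivable_schema (T ⊕ C) Hr Hs).
  - intros l Hl; specialize (He l Hl); rewrite in_app_iff, in_labels_app in He.
    rewrite !in_labels_app; tauto.
  - apply seq_equiv_trans with (T ⊕ P ⊕ C); [apply seq_app_swap |].
    apply seq_app_equiv; [apply seq_equiv_refl | exact HPC].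
  - apply wf_seq_app; split; [exact HT | exact (derivable_wf HS)].
  - apply (premisses_below_map _ Hps); intros m a Hm _ Ha.
    apply (derivable_perm _ (seq_app_swap _ _ _)); auto.
Qed.

Definition eigen_choice (e : option label) (k : kind) (Q : nat -> Prop) : Prop :=
  match e with
  | Some (k', m) => k' = k /\ Q m
  | None => forall m, Q m
  end.

Lemma eigen_choice_fresh {e k Q} L :
  eigen_fresh e L -> eigen_choice e k Q -> exists m, ~ In (k, m) L /\ Q m.
Proof.
  destruct e as [[k' m] |]; simpl.
  - intros He [-> HQ]; exists m; split; auto; apply He; reflexivity.
  - intros _ HQ; destruct (exists_fresh_label k L) as (m & Hm); eauto.
Qed.

(* [rep y] is the active part of the premiss of the rule with principal formula [phi], as a
   function of its eigenlabel [(k, y)]; constant when the rule has no eigenlabel. *)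
Record invertible (s : side) (phi : lform) (k : kind) (rep : nat -> sequent) : Prop := {
  invertible_wf : forall y, wf_seq (rep y);
  invertible_labels : forall y l, In l (labels (rep y)) -> l = (k, y) \/ In l (flabels phi);
  invertible_rename : forall y z, ~ In (k, y) (flabels phi) -> ~ In (k, z) (flabels phi) ->
    ren_seq (swap_ren k z y) (rep z) = rep y;
  invertible_principal : forall r P acts e, schema r P acts e -> In phi (part s P) ->
    P = single s phi /\ eigen_choice e k (fun m => In (rep m) acts)
}.

Lemma labels_single s phi : labels (single s phi) = flabels phi.
Proof. destruct s; apply app_nil_r. Qed.

Section Inversion.

Variables (K : calculus) (s : side) (phi : lform) (k : kind) (rep : nat -> sequent).
Hypothesis Hinv : invertible s phi k rep.

Lemma derivable_rename_active n C y z :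
  ~ In (k, y) (labels (single s phi ⊕ C)) -> ~ In (k, z) (labels (single s phi ⊕ C)) ->
  derivable K n (rep z ⊕ C) -> derivable K n (rep y ⊕ C).
Proof.
  rewrite !in_labels_app, labels_single; intros Hy Hz Hd.
  apply (derivable_ren (swap_ren k z y) (swap_ren_injective k z y)) in Hd.
  rewrite ren_seq_app, (invertible_rename _ _ _ _ Hinv), swap_ren_fresh in Hd; tauto.
Qed.

Lemma derivable_invert_principal n r P acts e C0 C y :
  schema r P acts e -> eigen_fresh e (labels (P ⊕ C0)) ->
  seq_equiv (P ⊕ C0) (single s phi ⊕ C) -> In phi (part s P) ->
  premisses_below K n (map (fun a => a ⊕ C0) acts) ->
  ~ In (k, y) (labels (single s phi ⊕ C)) -> derivable K n (rep y ⊕ C).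
Proof.
  intros Hs He HPC Hphi Hps Hy.
  destruct (invertible_principal _ _ _ _ Hinv _ _ _ _ Hs Hphi) as [-> Hch].
  destruct (eigen_choice_fresh _ He Hch) as (m & Hm & Hin).
  apply (derivable_perm (rep y ⊕ C0)).
  { apply seq_app_equiv; [apply seq_equiv_refl | exact (seq_equiv_single_cancel _ _ _ _ HPC)]. }
  apply (derivable_rename_active n C0 y m); auto.
  - intros H; apply Hy; apply in_labels_equiv with (1 := HPC); exact H.
  - exact (premisses_below_in Hps (in_map _ _ _ Hin)).
Qed.

Lemma derivable_invert_context n r P acts e C0 C1 C y :
  (forall m, m < n -> forall C y, ~ In (k, y) (labels (single s phi ⊕ C)) ->
     derivable K m (single s phi ⊕ C) -> derivable K m (rep y ⊕ C)) ->
  in_calc K r -> schema r P acts e -> eigen_fresh e (labels (P ⊕ C0)) ->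
  seq_equiv C0 (single s phi ⊕ C1) -> seq_equiv C (P ⊕ C1) -> wf_seq (single s phi ⊕ C) ->
  premisses_below K n (map (fun a => a ⊕ C0) acts) ->
  ~ In (k, y) (labels (single s phi ⊕ C)) -> derivable K n (rep y ⊕ C).
Proof.
  intros IH Hr Hs He HC0 HC Hwf Hps Hy.
  (* Rules such as Ref, N and T may bring [y] into the premisses, so these are inverted at a
     fresh [y'], renamed to [y] at the end. *)
  destruct (exists_fresh_label k (labels (single s phi ⊕ C ⊕ C1) ++ flat_map labels acts ++
                                  match e with Some l => [l] | None => [] end)) as (y' & Hy').
  rewrite !in_app_iff, !in_labels_app, in_flat_map in Hy'.
  apply (derivable_rename_active n C y y'); [exact Hy | rewrite in_labels_app; tauto |].
  assert (HC0' : forall l, In l (labels (single s phi)) \/ In l (labels C1) ->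
                           In l (labels (P ⊕ C0))).
  { intros l Hl; apply in_labels_app; right.
    apply in_labels_equiv with (1 := seq_equiv_sym _ _ HC0), in_labels_app; exact Hl. }
  apply (derivable_schema (rep y' ⊕ C1) Hr Hs).
  - intros l Hl; specialize (He l Hl).
    rewrite !in_labels_app; intros [HP | [Hrep | HC1]].
    + apply He, in_labels_app; auto.
    + destruct (invertible_labels _ _ _ _ Hinv _ _ Hrep) as [-> | Hphi].
      * destruct e; [injection Hl as ->; simpl in Hy'; tauto | discriminate].
      * apply He, HC0'; left; rewrite labels_single; exact Hphi.
    + apply He, HC0'; auto.
  - apply seq_equiv_trans with (rep y' ⊕ P ⊕ C1); [apply seq_app_swap |].
    apply seq_app_equiv; [apply seq_equiv_refl | exact (seq_equiv_sym _ _ HC)].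
  - apply wf_seq_app; split; [apply (invertible_wf _ _ _ _ Hinv) |].
    apply (wf_seq_app (single s phi) C), Hwf.
  - apply (premisses_below_map _ Hps); intros m act Hm Hact Hd.
    assert (Hprem : seq_equiv (act ⊕ C0) (single s phi ⊕ act ⊕ C1)).
    { apply seq_equiv_trans with (act ⊕ single s phi ⊕ C1); [| apply seq_app_swap].
      apply seq_app_equiv; [apply seq_equiv_refl | exact HC0]. }
    apply (derivable_perm _ (seq_app_swap _ _ _)), IH; auto.
    + rewrite !in_labels_app; intros [Hphi | [Hact' | HC1]]; apply Hy'; eauto 7.
    + exact (derivable_perm _ Hprem Hd).
Qed.

Lemma derivable_invert n C y :
  ~ In (k, y) (labels (single s phi ⊕ C)) ->
  derivable K n (single s phi ⊕ C) -> derivable K n (rep y ⊕ C).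
Proof.
  revert C y; induction n as [n IH] using lt_wf_ind; intros C y Hy Hd.
  destruct (derivable_last_rule Hd) as (r & P & acts & e & C0 & Hr & Hs & He & HPC & Hps).
  destruct (seq_equiv_single_split _ _ _ _ _ HPC) as [Hphi | (C1 & HC0 & HC)].
  - exact (derivable_invert_principal n r P acts e C0 C y Hs He HPC Hphi Hps Hy).
  - exact (derivable_invert_context n r P acts e C0 C1 C y IH Hr Hs He HC0 HC
             (derivable_wf Hd) Hps Hy).
Qed.

End Inversion.

Lemma derivable_invert_premiss {K n s phi k rep e a C} :
  invertible s phi k rep -> eigen_fresh e (labels (single s phi ⊕ C)) ->
  eigen_choice e k (fun m => a = rep m) ->
  derivable K n (single s phi ⊕ C) -> derivable K n (a ⊕ C).
Proof.
  intros Hinv He Hch Hd; destruct (eigen_choice_fresh _ He Hch) as (m & Hm & ->).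
  exact (derivable_invert K s phi k rep Hinv n C m Hm Hd).
Qed.

(** * The rules of CL* *)

Ltac solve_wf_seq :=
  let f := fresh "f" in let Hf := fresh "Hf" in
  intros f Hf; simpl in Hf; repeat destruct Hf as [<- | Hf]; try contradiction; simpl; tauto.

Ltac solve_principal :=
  let Hs := fresh "Hs" in let Hin := fresh "Hin" in
  intros ? ? ? ? Hs Hin; destruct Hs;
  try match goal with t : at_schema |- _ => destruct t end;
  simpl in Hin;
  repeat match goal with
         | H : contraction ?L _, H' : In _ ?L |- _ =>
             apply (contraction_incl _ _ _ H) in H'; simpl in H'
         | H : _ \/ _ |- _ => destruct H
         | H : False |- _ => destruct H
         | H : _ = _ |- _ => discriminate H
         | H : _ = _ |- _ => injection H; clear H; intros; subst
         end;
  simpl; intuition.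

Lemma invertible_const s phi acts0 :
  (forall r P acts e, schema r P acts e -> In phi (part s P) ->
     P = single s phi /\ e = None /\ acts = acts0) ->
  forall k R, In R acts0 -> wf_seq R -> incl (labels R) (flabels phi) ->
  invertible s phi k (fun _ => R).
Proof.
  intros Hprin k R HR Hwf Hincl; split.
  - intros _; exact Hwf.
  - intros y l Hl; right; apply Hincl, Hl.
  - intros y z Hy Hz; apply swap_ren_fresh; intros H; apply Hincl in H; contradiction.
  - intros r P acts e Hs Hphi; destruct (Hprin _ _ _ _ Hs Hphi) as (-> & -> & ->).
    split; [reflexivity | intros _; exact HR].
Qed.

Ltac solve_const :=
  intros k R HR; apply invertible_const with (2 := HR); [solve_principal | |];
  simpl in HR; repeat destruct HR as [<- | HR]; try contradiction;
  first [solve [solve_wf_seq] | intros l Hl; simpl in *; tauto].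

Lemma invertible_andL x A B k R : In R [([LW x A; LW x B], [])] ->
  invertible Antecedent (LW x (And A B)) k (fun _ => R).
Proof. revert k R; solve_const. Qed.

Lemma invertible_andR x A B k R : In R [([], [LW x A]); ([], [LW x B])] ->
  invertible Succedent (LW x (And A B)) k (fun _ => R).
Proof. revert k R; solve_const. Qed.

Lemma invertible_orL x A B k R : In R [([LW x A], []); ([LW x B], [])] ->
  invertible Antecedent (LW x (Or A B)) k (fun _ => R).
Proof. revert k R; solve_const. Qed.

Lemma invertible_orR x A B k R : In R [([], [LW x A; LW x B])] ->
  invertible Succedent (LW x (Or A B)) k (fun _ => R).
Proof. revert k R; solve_const. Qed.

Lemma invertible_impL x A B k R : In R [([], [LW x A]); ([LW x B], [])] ->
  invertible Antecedent (LW x (Imp A B)) k (fun _ => R).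
Proof. revert k R; solve_const. Qed.

Lemma invertible_impR x A B k R : In R [([LW x A], [LW x B])] ->
  invertible Succedent (LW x (Imp A B)) k (fun _ => R).
Proof. revert k R; solve_const. Qed.

Ltac solve_rename s phi k :=
  let y := fresh "y" in let z := fresh "z" in
  let Hy := fresh "Hy" in let Hz := fresh "Hz" in let Hphi := fresh "Hphi" in
  intros y z Hy Hz;
  pose proof (swap_ren_fresh k z y (single s phi)) as Hphi;
  rewrite labels_single in Hphi; specialize (Hphi Hz Hy);
  unfold ren_seq in *; simpl in *; rewrite ?transpose_left; congruence.

Ltac solve_eigen s phi k :=
  split;
  [ intros ?; solve_wf_seq
  | intros ? ? Hl; simpl in Hl; rewrite ?in_app_iff in Hl; simpl in Hl;
    simpl; intuition subst; auto
  | solve_rename s phi k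
  | solve_principal ].

Lemma invertible_allR a A :
  invertible Succedent (LAll a A) World (fun y => ([LIn y a], [LW y A])).
Proof. solve_eigen Succedent (LAll a A) World. Qed.

Lemma invertible_exL a A :
  invertible Antecedent (LEx a A) World (fun y => ([LIn y a; LW y A], [])).
Proof. solve_eigen Antecedent (LEx a A) World. Qed.

Lemma invertible_condR x A B :
  invertible Succedent (LW x (Cond A B)) Nbhd
    (fun n => ([LNb (NVar n) x; LEx (NVar n) A], [LCmp x (NVar n) A B])).
Proof. solve_eigen Succedent (LW x (Cond A B)) Nbhd. Qed.

Lemma invertible_barL x a A B :
  invertible Antecedent (LCmp x a A B) Nbhd
    (fun n => ([LNb (NVar n) x; LSub (NVar n) a; LEx (NVar n) A;
                LAll (NVar n) (Imp A B)], [])).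
Proof. solve_eigen Antecedent (LCmp x a A B) Nbhd. Qed.

Tactic Notation "cumulative" uconstr(T) :=
  left; exists T; split; [solve_wf_seq | split; simpl;
    first [reflexivity | apply perm_swap
          | etransitivity; [apply perm_skip, perm_swap | apply perm_swap]]].

Ltac principal H :=
  right; do 4 eexists; split; [apply H; simpl; auto | split; [reflexivity | simpl; intuition]].

Lemma schema_premiss_cases r P acts e act :
  schema r P acts e -> In act acts ->
  (exists T, wf_seq T /\ seq_equiv act (T ⊕ P)) \/
  (exists s phi k rep, invertible s phi k rep /\ P = single s phi /\
     eigen_choice e k (fun m => act = rep m)).
Proof.
  intros Hs Ha; destruct Hs; simpl in Ha; repeat destruct Ha as [<- | Ha]; try contradiction.
  - principal (invertible_andL x A B World ([LW x A; LW x B], [])).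
  - principal (invertible_andR x A B World ([], [LW x A])).
  - principal (invertible_andR x A B World ([], [LW x B])).
  - principal (invertible_orL x A B World ([LW x A], [])).
  - principal (invertible_orL x A B World ([LW x B], [])).
  - principal (invertible_orR x A B World ([], [LW x A; LW x B])).
  - principal (invertible_impL x A B World ([], [LW x A])).
  - principal (invertible_impL x A B World ([LW x B], [])).
  - principal (invertible_impR x A B World ([LW x A], [LW x B])).
  - cumulative ([LW x A], []).
  - principal (invertible_allR a A).
  - principal (invertible_exL a A).
  - cumulative ([], [LW x A]).
  - principal (invertible_condR x A B).
  - cumulative ([], [LEx a A]).
  - cumulative ([LCmp x a A B], []).
  - cumulative ([], [LEx c A]).
  - cumulative ([], [LAll c (Imp A B)]).
  - principal (invertible_barL x a A B).
  - cumulative ([LSub a a], []).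
  - cumulative ([LSub c a], []).
  - cumulative ([LIn x b], []).
  - cumulative ([LNb (NVar n) x], []).
  - cumulative ([LIn y a], []).
  - cumulative ([LIn x (NVar n); LNb (NVar n) x], []).
  - cumulative ([LIn x a], []).
  - cumulative ([LIn x (NSing x)], []).
  - cumulative ([LNb (NSing x) x; LSub (NSing x) a], []).
  - cumulative ([At t y], []).
  - cumulative ([At t x], []).
  - cumulative ([LIn z (NVar n); LNb (NVar n) x], []).
  - cumulative ([LIn z (NVar n); LNb (NVar n) y], []).
  - cumulative ([LNb b y], []).
  - cumulative ([LNb b x], []).
Qed.

Theorem mainTheorem11 :
  forall (K : calculus) (r : rule), in_calc K r ->
  forall (ps : list sequent) (c : sequent), inst r ps c ->
  forall n : nat, derivable K n c ->
  forall P : sequent, In P ps -> derivable K n P.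
Proof.
  (* The rule need not belong to [K]. *)
  intros K r _ ps c Hi n Hd P HP.
  destruct (inst_schema Hi) as (Q & acts & e & C & Hs & -> & -> & He).
  apply in_map_iff in HP as (act & <- & Hact).
  destruct (schema_premiss_cases _ _ _ _ _ Hs Hact)
    as [(T & HT & HactT) | (s & phi & k & rep & Hinv & -> & Hrep)].
  - apply (derivable_perm (T ⊕ Q ⊕ C)).
    + rewrite <- seq_app_assoc.
      apply seq_app_equiv; [apply seq_equiv_sym, HactT | apply seq_equiv_refl].
    + exact (derivable_weaken T HT Hd).
  - exact (derivable_invert_premiss Hinv He Hrep Hd).
Qed.
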